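(* Let $X$ be a Polish space and let $T$ be either a (global) jointly continuous semigroup on $X$ or a local semigroup on $X$, and let $A$ be the Lie generator of $T$. Then $A$ has a positive eigenvalue (i.e. there exist $\lambda>0$ and $f \in D(A)$, $f\neq 0$, with $Af=\lambda f$) if and only if $T$ is a local semigroup.
   Context: $CB(X)$ denotes the Banach space (sup norm) of bounded continuous real-valued functions on $X$. A (global) jointly continuous semigroup on $X$ is a map $t\mapsto T(t)$ from $[0,\infty)$ to the set of maps $X\to X$ such that $T(0)x=x$ for all $x\in X$, $T(t)T(s)=T(t+s)$ for all $t,s\ge 0$ (composition), and $(t,x)\mapsto T(t)x$ is continuous on $[0,\infty)\times X$. A local semigroup on $X$ is given by a function $m: X\to(0,\infty]$ such that $1/m$ (with $1/\infty=0$) is continuous and $m$ is not identically $\infty$, together with maps $T(t)$ such that: $x\in D(T(t))$ if and only if $t\in[0,m(x))$; $T(0)x=x$; for $t,s\ge0$ and $x\in X$, $T(t)T(s)x=T(t+s)x$ holds if and only if $t+s<m(x)$; $(t,x)\mapsto T(t)x$ is continuous on $\{(t,x): 0\le t<m(x)\}$; and $T$ is maximal: if $\lim_{t\to s^-}T(t)x$ exists then $s<m(x)$. The Lie generator of $T$ is the linear operator $A$ on $CB(X)$ given by $A=\{(f,g)\in CB(X)^2 : g(x)=\lim_{t\to0^+}\frac1t\,(f(T(t)x)-f(x)) \text{ for every } x\in X\}$, i.e. $f\in D(A)$ and $Af=g$ exactly when this limit exists for every $x$ and defines a function $g\in CB(X)$. *)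

From Stdlib Require Import Reals.
Open Scope R_scope.

Definition is_metric {X : Type} (d : X -> X -> R) : Prop :=
  (forall x y, 0 <= d x y) /\
  (forall x y, d x y = 0 <-> x = y) /\
  (forall x y, d x y = d y x) /\
  (forall x y z, d x z <= d x y + d y z).

Definition metric_complete {X : Type} (d : X -> X -> R) : Prop :=
  forall u : nat -> X,
    (forall eps, 0 < eps -> exists N, forall n p, (N <= n)%nat -> (N <= p)%nat ->
        d (u n) (u p) < eps) ->
    exists l, forall eps, 0 < eps -> exists N, forall n, (N <= n)%nat -> d (u n) l < eps.

Definition metric_separable {X : Type} (d : X -> X -> R) : Prop :=
  exists u : nat -> X, forall x eps, 0 < eps -> exists n, d x (u n) < eps.

Definition polish {X : Type} (d : X -> X -> R) : Prop :=
  is_metric d /\ metric_complete d /\ metric_separable d.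

Definition cont_X {X : Type} (d : X -> X -> R) (f : X -> R) : Prop :=
  forall x eps, 0 < eps -> exists delta, 0 < delta /\
    forall y, d x y < delta -> Rabs (f y - f x) < eps.

Definition CB {X : Type} (d : X -> X -> R) (f : X -> R) : Prop :=
  cont_X d f /\ exists M, forall x, Rabs (f x) <= M.

(** * Semigroups.  A (possibly local) semigroup is a partial map
    T : R -> X -> option X, where T t x = Some y means x ∈ D(T(t)) and T(t)x = y.
    Only t >= 0 is meaningful. *)

(** Domain {(t,x) : 0 <= t < m(x)}; m x = None encodes m(x) = +infinity. *)
Definition in_dom {X : Type} (m : X -> option R) (t : R) (x : X) : Prop :=
  0 <= t /\ match m x with None => True | Some r => t < r end.

(** 1/m with 1/infinity = 0 *)
Definition inv_m {X : Type} (m : X -> option R) (x : X) : R :=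
  match m x with None => 0 | Some r => / r end.

Definition is_global_semigroup {X : Type} (d : X -> X -> R)
    (T : R -> X -> option X) : Prop :=
  exists G : R -> X -> X,
    (forall t x, 0 <= t -> T t x = Some (G t x)) /\
    (forall x, G 0 x = x) /\
    (forall t s x, 0 <= t -> 0 <= s -> G t (G s x) = G (t + s) x) /\
    (forall t x, 0 <= t -> forall eps, 0 < eps -> exists delta, 0 < delta /\
       forall t' x', 0 <= t' -> Rabs (t' - t) < delta -> d x x' < delta ->
         d (G t x) (G t' x') < eps).

Definition is_local_semigroup {X : Type} (d : X -> X -> R)
    (T : R -> X -> option X) : Prop :=
  exists m : X -> option R,
    (forall x r, m x = Some r -> 0 < r) /\
    cont_X d (inv_m m) /\
    (exists x, m x <> None) /\
    (forall t x, 0 <= t -> (T t x <> None <-> in_dom m t x)) /\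
    (forall x, T 0 x = Some x) /\
    (* T(t)T(s)x = T(t+s)x (both sides defined and equal) iff t+s < m(x) *)
    (forall t s x, 0 <= t -> 0 <= s ->
       ((match T s x with None => None | Some y => T t y end) = T (t + s) x
         /\ T (t + s) x <> None) <-> in_dom m (t + s) x) /\
    (forall t x, in_dom m t x -> forall eps, 0 < eps -> exists delta, 0 < delta /\
       forall t' x' y y', in_dom m t' x' -> Rabs (t' - t) < delta -> d x x' < delta ->
         T t x = Some y -> T t' x' = Some y' -> d y y' < eps) /\
    (* maximality: if lim_{t -> s^-} T(t)x exists then s < m(x) *)
    (forall x s, 0 < s -> (forall t, 0 <= t < s -> T t x <> None) ->
       (exists z, forall eps, 0 < eps -> exists delta, 0 < delta /\
          forall t y, 0 <= t -> s - delta < t < s -> T t x = Some y -> d y z < eps) ->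
       in_dom m s x).

Definition lie_gen {X : Type} (d : X -> X -> R) (T : R -> X -> option X)
    (f g : X -> R) : Prop :=
  CB d f /\ CB d g /\
  forall x eps, 0 < eps -> exists delta, 0 < delta /\
    forall t y, 0 < t < delta -> T t x = Some y ->
      Rabs ((f y - f x) / t - g x) < eps.

Definition has_pos_eigenvalue {X : Type} (d : X -> X -> R)
    (T : R -> X -> option X) : Prop :=
  exists lam f, 0 < lam /\ lie_gen d T f (fun x => lam * f x) /\ exists x, f x <> 0.

(** If [A f = lam f] with [lam > 0] and [f x0 = c <> 0], then
    [k t := c * f (G t x0)] is continuous on [[0,oo)], has right derivative
    [lam * k t] there and [k 0 = c^2 > 0].  A "real induction" argument shows
    that such a function grows at least linearly, [k t >= k 0 + (lam k 0 / 2) t],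
    contradicting the boundedness of [f].

    The lifetime [m] decreases at unit speed along orbits,
    [m (T t x) = m x - t] (a consequence of the semigroup law and of
    maximality).  Hence [g x := exp (- m x)] (with [g x = 0] when [m x] is
    infinite) satisfies [g (T t x) = exp t * g x]; it is bounded by 1,
    continuous because [1/m] is continuous and [u |-> exp (-1/u)] extends
    continuously by 0 at 0, and nonzero since [m] is somewhere finite.
    So [g] is an eigenfunction of [A] for the eigenvalue 1. *)

From Stdlib Require Import Reals.
From Stdlib Require Import Lra Classical FunctionalExtensionality.
Open Scope R_scope.

Lemma real_induction (P : R -> Prop) :
  P 0 ->
  (forall t, 0 < t -> (forall s, 0 <= s < t -> P s) -> P t) ->
  (forall t, 0 <= t -> (forall s, 0 <= s <= t -> P s) ->
     exists del, 0 < del /\ forall s, t < s < t + del -> P s) ->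
  forall t, 0 <= t -> P t.
Proof.
  intros H0 Hclosed Hextend b Hb.
  destruct (classic (P b)) as [|Hnb]; [assumption|exfalso].
  (* [sg] is the supremum of the [t <= b] such that [P] holds on [[0,t]]. *)
  set (E := fun t => 0 <= t <= b /\ forall s, 0 <= s <= t -> P s).
  assert (HEbound : bound E) by (exists b; intros t [[_ ?] _]; lra).
  assert (HE0 : E 0).
  { split; [lra|]. intros s Hs. replace s with 0 by lra. exact H0. }
  destruct (completeness E HEbound (ex_intro _ 0 HE0)) as [sg [Hub Hlub]].
  assert (Hsg0 : 0 <= sg) by (apply Hub; exact HE0).
  assert (Hsgb : sg <= b) by (apply Hlub; intros t [[_ ?] _]; lra).
  assert (Hbelow : forall s, 0 <= s < sg -> P s).
  { intros s Hs. destruct (classic (P s)) as [|Hns]; [assumption|exfalso].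
    assert (Hs_ub : is_upper_bound E s).
    { intros t [Ht Hall]. destruct (Rle_dec t s) as [|Hts]; [assumption|].
      exfalso. apply Hns. apply Hall. lra. }
    specialize (Hlub s Hs_ub). lra. }
  assert (Hupto : forall s, 0 <= s <= sg -> P s).
  { assert (Hsg : P sg).
    { destruct (Req_dec sg 0) as [->|]; [exact H0|]. apply Hclosed; [lra|exact Hbelow]. }
    intros s Hs. destruct (Req_dec s sg) as [->|]; [exact Hsg|apply Hbelow; lra]. }
  destruct (Req_dec sg b) as [Heq|Hne].
  { apply Hnb. apply Hupto. lra. }
  (* Otherwise [P] extends beyond [sg], contradicting maximality. *)
  destruct (Hextend sg Hsg0 Hupto) as [del [Hdel Hd]].
  assert (Hmin1 : Rmin del (b - sg) <= del) by apply Rmin_l.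
  assert (Hmin2 : Rmin del (b - sg) <= b - sg) by apply Rmin_r.
  assert (Hmin0 : 0 < Rmin del (b - sg)) by (apply Rmin_pos; lra).
  set (t1 := sg + Rmin del (b - sg) / 2).
  assert (HE1 : E t1).
  { split; [unfold t1; lra|]. intros s Hs.
    destruct (Rle_dec s sg); [apply Hupto; lra|apply Hd; unfold t1 in Hs; lra]. }
  assert (t1 <= sg) by (apply Hub; exact HE1). unfold t1 in *; lra.
Qed.

Lemma absorb_factor (c eps : R) : 0 <= c -> 0 < eps -> c * (eps / (c + 1)) < eps.
Proof.
  intros Hc Heps.
  assert (Heq : c * (eps / (c + 1)) = eps - eps / (c + 1)) by (field; lra).
  assert (0 < eps / (c + 1)) by (apply Rdiv_lt_0_compat; lra).
  lra.
Qed.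

Lemma Rabs_mult_small (c u eps : R) :
  0 < eps -> Rabs u < eps / (Rabs c + 1) -> Rabs (c * u) < eps.
Proof.
  intros Heps Hu. rewrite Rabs_mult.
  pose proof (Rabs_pos c) as Hc.
  apply Rle_lt_trans with (Rabs c * (eps / (Rabs c + 1))).
  - apply Rmult_le_compat_l; lra.
  - apply absorb_factor; assumption.
Qed.

Definition continuous_on_nonneg (k : R -> R) : Prop :=
  forall t, 0 <= t -> forall eps, 0 < eps -> exists del, 0 < del /\
    forall s, 0 <= s -> Rabs (s - t) < del -> Rabs (k s - k t) < eps.

Definition right_ode (k : R -> R) (lam : R) : Prop :=
  forall t, 0 <= t -> forall eps, 0 < eps -> exists del, 0 < del /\
    forall s, 0 < s < del -> Rabs ((k (t + s) - k t) / s - lam * k t) < eps.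

Lemma linear_lower_bound (k : R -> R) (a : R) :
  0 <= a -> continuous_on_nonneg k ->
  (forall t, 0 <= t -> k 0 + a * t <= k t ->
     exists del, 0 < del /\ forall s, t < s < t + del -> k t + a * (s - t) <= k s) ->
  forall t, 0 <= t -> k 0 + a * t <= k t.
Proof.
  intros Ha Hcont Hstep.
  apply (real_induction (fun t => k 0 + a * t <= k t)).
  - lra.
  - intros t Ht Hbelow.
    destruct (Rle_lt_dec (k 0 + a * t) (k t)) as [|Hlt]; [assumption|exfalso].
    set (D := k 0 + a * t - k t).
    assert (HD : 0 < D) by (unfold D; lra).
    destruct (Hcont t (Rlt_le _ _ Ht) (D / 2) ltac:(lra)) as [del [Hdel Hnear]].
    assert (HD' : 0 < D / 2 / (a + 1)) by (apply Rdiv_lt_0_compat; lra).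
    set (w := Rmin del (Rmin t (D / 2 / (a + 1)))).
    assert (Hw1 : w <= del) by apply Rmin_l.
    assert (Hw2 : w <= t) by (unfold w; eapply Rle_trans; [apply Rmin_r|apply Rmin_l]).
    assert (Hw3 : w <= D / 2 / (a + 1))
      by (unfold w; eapply Rle_trans; [apply Rmin_r|apply Rmin_r]).
    assert (Hw0 : 0 < w) by (unfold w; repeat apply Rmin_pos; lra).
    (* A point [s] slightly left of [t]: [k s] is above the line and close to [k t]. *)
    set (s := t - w / 2).
    assert (Hs : 0 <= s < t) by (unfold s; lra).
    pose proof (Hbelow s Hs) as Hks.
    assert (Hst : Rabs (s - t) < del) by (unfold s; apply Rabs_def1; lra).
    pose proof (Hnear s (proj1 Hs) Hst) as Hclose.
    assert (Haw : a * w < D / 2).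
    { eapply Rle_lt_trans; [apply Rmult_le_compat_l; [lra|exact Hw3]|].
      apply absorb_factor; lra. }
    pose proof (Rle_abs (k s - k t)).
    assert (Has : a * s = a * t - a * w / 2) by (unfold s; field).
    unfold D in *. lra.
  - intros t Ht Hupto.
    destruct (Hstep t Ht (Hupto t (conj Ht (Rle_refl t)))) as [del [Hdel Hs]].
    exists del. split; [exact Hdel|]. intros s Hts.
    pose proof (Hupto t (conj Ht (Rle_refl t))). pose proof (Hs s Hts). lra.
Qed.

Lemma right_ode_linear_growth (k : R -> R) (lam : R) :
  0 < lam -> 0 < k 0 -> continuous_on_nonneg k -> right_ode k lam ->
  forall t, 0 <= t -> k 0 + lam * k 0 / 2 * t <= k t.
Proof.
  intros Hlam Hk0 Hcont Hode.
  assert (Hslope : 0 < lam * k 0) by (apply Rmult_lt_0_compat; lra).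
  apply linear_lower_bound; [lra|exact Hcont|].
  intros t Ht Habove.
  assert (Hkt : lam * k 0 <= lam * k t).
  { apply Rmult_le_compat_l; [lra|].
    assert (0 <= lam * k 0 / 2 * t) by (apply Rmult_le_pos; lra). lra. }
  destruct (Hode t Ht (lam * k 0 / 2) ltac:(lra)) as [del [Hdel Hq]].
  exists del. split; [exact Hdel|]. intros s Hs.
  set (h := s - t).
  assert (Hh : 0 < h < del) by (unfold h; lra).
  specialize (Hq h Hh). replace (t + h) with s in Hq by (unfold h; ring).
  pose proof (Rle_abs (lam * k t - (k s - k t) / h)).
  rewrite Rabs_minus_sym in Hq.
  assert (Hquot : lam * k 0 / 2 <= (k s - k t) / h) by lra.
  assert (Hdiff : k s - k t = h * ((k s - k t) / h)) by (field; lra).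
  assert (h * (lam * k 0 / 2) <= h * ((k s - k t) / h))
    by (apply Rmult_le_compat_l; lra).
  fold h. lra.
Qed.

(** * Global semigroups have no positive eigenvalue *)

Lemma metric_refl {X : Type} (d : X -> X -> R) : is_metric d -> forall x, d x x = 0.
Proof. intros Hm x. apply (proj1 (proj2 Hm)). reflexivity. Qed.

Section GlobalOrbit.

Variables (X : Type) (d : X -> X -> R) (G : R -> X -> X) (f : X -> R) (lam : R).
Hypothesis Hd_refl : forall x, d x x = 0.
Hypothesis HGsemi : forall t s x, 0 <= t -> 0 <= s -> G t (G s x) = G (t + s) x.
Hypothesis HGcont : forall t x, 0 <= t -> forall eps, 0 < eps -> exists delta, 0 < delta /\
  forall t' x', 0 <= t' -> Rabs (t' - t) < delta -> d x x' < delta ->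
    d (G t x) (G t' x') < eps.
Hypothesis Hfcont : cont_X d f.
Hypothesis Hgen : forall x eps, 0 < eps -> exists delta, 0 < delta /\
  forall t, 0 < t < delta -> Rabs ((f (G t x) - f x) / t - lam * f x) < eps.

Lemma orbit_continuous (c : R) (x0 : X) : continuous_on_nonneg (fun t => c * f (G t x0)).
Proof.
  intros t Ht eps Heps.
  assert (Heps' : 0 < eps / (Rabs c + 1))
    by (apply Rdiv_lt_0_compat; [lra|pose proof (Rabs_pos c); lra]).
  destruct (Hfcont (G t x0) _ Heps') as [d1 [Hd1 Hf1]].
  destruct (HGcont t x0 Ht d1 Hd1) as [d2 [Hd2 HG2]].
  exists d2. split; [exact Hd2|]. intros s Hs Hst.
  replace (c * f (G s x0) - c * f (G t x0)) with (c * (f (G s x0) - f (G t x0))) by ring.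
  apply Rabs_mult_small; [exact Heps|]. apply Hf1. apply HG2; [lra|exact Hst|].
  rewrite Hd_refl. exact Hd2.
Qed.

Lemma orbit_right_ode (c : R) (x0 : X) : right_ode (fun t => c * f (G t x0)) lam.
Proof.
  intros t Ht eps Heps.
  assert (Heps' : 0 < eps / (Rabs c + 1))
    by (apply Rdiv_lt_0_compat; [lra|pose proof (Rabs_pos c); lra]).
  destruct (Hgen (G t x0) _ Heps') as [del [Hdel Hq]].
  exists del. split; [exact Hdel|]. intros s Hs.
  specialize (Hq s Hs). rewrite HGsemi in Hq by lra. rewrite Rplus_comm.
  replace ((c * f (G (s + t) x0) - c * f (G t x0)) / s - lam * (c * f (G t x0)))
    with (c * ((f (G (s + t) x0) - f (G t x0)) / s - lam * f (G t x0))) by (field; lra).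
  apply Rabs_mult_small; assumption.
Qed.

End GlobalOrbit.

Lemma global_no_pos_eigenvalue {X : Type} (d : X -> X -> R) (T : R -> X -> option X) :
  is_metric d -> is_global_semigroup d T -> ~ has_pos_eigenvalue d T.
Proof.
  intros Hm [G [HTG [HG0 [HGsemi HGcont]]]]
    [lam [f [Hlam [[[Hfcont [M HM]] [_ Hlim]] [x0 Hx0]]]]].
  set (c := f x0) in *.
  set (k := fun t => c * f (G t x0)).
  assert (Hgen : forall x eps, 0 < eps -> exists delta, 0 < delta /\
      forall t, 0 < t < delta -> Rabs ((f (G t x) - f x) / t - lam * f x) < eps).
  { intros x eps Heps. destruct (Hlim x eps Heps) as [del [Hdel Hq]].
    exists del. split; [exact Hdel|]. intros t Ht. apply Hq; [exact Ht|].
    apply HTG. lra. }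
  assert (Hk0 : k 0 = c * c) by (unfold k; rewrite HG0; reflexivity).
  assert (Hc2 : 0 < c * c) by (pose proof (Rsqr_pos_lt c Hx0); unfold Rsqr in *; lra).
  pose proof (right_ode_linear_growth k lam Hlam ltac:(lra)
    (orbit_continuous X d G f (metric_refl d Hm) HGcont Hfcont c x0)
    (orbit_right_ode X G f lam HGsemi Hgen c x0)) as Hgrowth.
  assert (Hbound : forall t, k t <= Rabs c * M).
  { intro t. unfold k. apply Rle_trans with (Rabs (c * f (G t x0))); [apply Rle_abs|].
    rewrite Rabs_mult. apply Rmult_le_compat_l; [apply Rabs_pos|apply HM]. }
  set (a := lam * k 0 / 2) in *.
  assert (Ha : 0 < a).
  { unfold a. rewrite Hk0. assert (0 < lam * (c * c)) by (apply Rmult_lt_0_compat; lra). lra. }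
  assert (HM0 : 0 <= M) by (pose proof (HM x0); pose proof (Rabs_pos (f x0)); lra).
  set (t := Rabs c * M / a + 1).
  assert (Ht : a * t = Rabs c * M + a) by (unfold t; field; lra).
  assert (Ht0 : 0 <= t).
  { unfold t. assert (0 <= Rabs c * M / a); [|lra].
    apply Rmult_le_pos; [apply Rmult_le_pos; [apply Rabs_pos|lra]|].
    left; apply Rinv_0_lt_compat; lra. }
  pose proof (Hgrowth t Ht0). pose proof (Hbound t). lra.
Qed.

(** * Local semigroups have the eigenvalue 1 *)

Definition flat_exp (u : R) : R := if Rle_dec u 0 then 0 else exp (- / u).

(** [exp (-1/v) <= v], which gives continuity of [flat_exp] at 0. *)
Lemma flat_exp_le (v : R) : 0 < v -> exp (- / v) <= v.
Proof.
  intro Hv.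
  assert (Hiv : 0 < / v) by (apply Rinv_0_lt_compat; lra).
  pose proof (exp_ineq1 (/ v) ltac:(lra)).
  rewrite exp_Ropp. rewrite <- (Rinv_inv v) at 2.
  left. apply Rinv_lt_contravar; [apply Rmult_lt_0_compat; [exact Hiv|apply exp_pos]|lra].
Qed.

Lemma flat_exp_continuous (u : R) : 0 <= u -> forall eps, 0 < eps -> exists del, 0 < del /\
  forall v, 0 <= v -> Rabs (v - u) < del -> Rabs (flat_exp v - flat_exp u) < eps.
Proof.
  intros Hu eps Heps.
  destruct (Req_dec u 0) as [->|Hne].
  - exists eps. split; [exact Heps|]. intros v Hv Hvd.
    rewrite Rminus_0_r in Hvd. unfold flat_exp.
    destruct (Rle_dec 0 0) as [_|]; [|lra]. rewrite Rminus_0_r.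
    destruct (Rle_dec v 0).
    + rewrite Rabs_R0. exact Heps.
    + rewrite Rabs_right by (left; apply exp_pos). rewrite Rabs_right in Hvd by lra.
      pose proof (flat_exp_le v ltac:(lra)). lra.
  - assert (Hc : continuity_pt (fun v => exp (- / v)) u) by (reg; lra).
    destruct (Hc eps Heps) as [alp [Halp Hal]].
    exists (Rmin alp (u / 2)). split; [apply Rmin_pos; lra|].
    intros v Hv Hvd.
    assert (Hm1 : Rmin alp (u / 2) <= alp) by apply Rmin_l.
    assert (Hm2 : Rmin alp (u / 2) <= u / 2) by apply Rmin_r.
    assert (Hvp : 0 < v).
    { destruct (Rle_dec v (u / 2)); [|lra]. rewrite Rabs_left1 in Hvd; lra. }
    unfold flat_exp. destruct (Rle_dec v 0); [lra|]. destruct (Rle_dec u 0); [lra|].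
    destruct (Req_dec v u) as [->|Hvu]; [rewrite Rminus_diag, Rabs_R0; exact Heps|].
    apply (Hal v). split; [split; [exact I|intro; apply Hvu; symmetry; assumption]|].
    simpl. unfold R_dist. lra.
Qed.

(** The candidate eigenfunction [exp (- m x)], with [exp (- oo) = 0]. *)
Definition lifetime_weight {X : Type} (m : X -> option R) (x : X) : R :=
  match m x with None => 0 | Some r => exp (- r) end.

Section LocalSemigroup.

Variables (X : Type) (d : X -> X -> R) (T : R -> X -> option X) (m : X -> option R).
Hypothesis Hd_refl : forall x, d x x = 0.
Hypothesis Hd_sym : forall x y, d x y = d y x.
Hypothesis Hpos : forall x r, m x = Some r -> 0 < r.
Hypothesis Hdom : forall t x, 0 <= t -> (T t x <> None <-> in_dom m t x).
Hypothesis Hsemi : forall t s x, 0 <= t -> 0 <= s ->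
  ((match T s x with None => None | Some y => T t y end) = T (t + s) x
    /\ T (t + s) x <> None) <-> in_dom m (t + s) x.
Hypothesis Hcont : forall t x, in_dom m t x -> forall eps, 0 < eps -> exists delta, 0 < delta /\
  forall t' x' y y', in_dom m t' x' -> Rabs (t' - t) < delta -> d x x' < delta ->
    T t x = Some y -> T t' x' = Some y' -> d y y' < eps.
Hypothesis Hmax : forall x s, 0 < s -> (forall t, 0 <= t < s -> T t x <> None) ->
  (exists z, forall eps, 0 < eps -> exists delta, 0 < delta /\
     forall t y, 0 <= t -> s - delta < t < s -> T t x = Some y -> d y z < eps) ->
  in_dom m s x.

Lemma orbit_tail (t s : R) (x y : X) : 0 <= t -> 0 <= s -> T t x = Some y ->
  in_dom m (s + t) x -> T s y = T (s + t) x /\ in_dom m s y.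
Proof.
  intros Ht Hs Hxy Hin.
  pose proof (proj2 (Hsemi s t x Hs Ht) Hin) as [Heq Hdef].
  rewrite Hxy in Heq. split; [exact Heq|].
  apply (proj1 (Hdom s y Hs)). rewrite Heq. exact Hdef.
Qed.

(** By maximality, the orbit of [y = T t x] cannot outlive the orbit of [x]:
    otherwise [T u x] would converge as [u] tends to [m x] from the left. *)
Lemma orbit_dies_at_lifetime (t r : R) (x y : X) : 0 <= t -> m x = Some r ->
  T t x = Some y -> ~ in_dom m (r - t) y.
Proof.
  intros Ht Hmx Hxy Hin.
  assert (Htx : in_dom m t x) by (apply (proj1 (Hdom t x Ht)); rewrite Hxy; discriminate).
  assert (Htr : t < r) by (unfold in_dom in Htx; rewrite Hmx in Htx; tauto).
  assert (Hr0 : 0 < r) by exact (Hpos x r Hmx).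
  destruct (T (r - t) y) as [z|] eqn:Hz.
  2:{ apply (proj2 (Hdom (r - t) y ltac:(lra)) Hin). exact Hz. }
  assert (Hxr : in_dom m r x).
  { apply Hmax; [exact Hr0| |].
    - intros u Hu. apply (proj2 (Hdom u x (proj1 Hu))). unfold in_dom. rewrite Hmx. lra.
    - exists z. intros eps Heps.
      destruct (Hcont (r - t) y Hin eps Heps) as [del [Hdel Hc]].
      assert (Hm1 : Rmin del (r - t) <= del) by apply Rmin_l.
      assert (Hm2 : Rmin del (r - t) <= r - t) by apply Rmin_r.
      exists (Rmin del (r - t)). split; [apply Rmin_pos; lra|].
      intros u w Hu Hur Huw.
      assert (Hin' : in_dom m ((u - t) + t) x).
      { unfold in_dom. rewrite Hmx. lra. }
      destruct (orbit_tail t (u - t) x y Ht ltac:(lra) Hxy Hin') as [Heq Hdom'].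
      replace (u - t + t) with u in Heq by ring. rewrite Huw in Heq.
      rewrite Hd_sym. apply (Hc (u - t) y); try assumption.
      + apply Rabs_def1; lra.
      + rewrite Hd_refl. exact Hdel. }
  unfold in_dom in Hxr. rewrite Hmx in Hxr. lra.
Qed.

Lemma lifetime_shift (t : R) (x y : X) : 0 <= t -> T t x = Some y ->
  m y = option_map (fun r => r - t) (m x).
Proof.
  intros Ht Hxy.
  destruct (m x) as [r|] eqn:Hmx; simpl.
  - assert (Hbefore : forall s, 0 <= s < r - t -> in_dom m s y).
    { intros s Hs. apply (orbit_tail t s x y Ht (proj1 Hs) Hxy).
      unfold in_dom. rewrite Hmx. lra. }
    pose proof (orbit_dies_at_lifetime t r x y Ht Hmx Hxy) as Hdies.
    assert (Htr : in_dom m t x) by (apply (proj1 (Hdom t x Ht)); rewrite Hxy; discriminate).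
    unfold in_dom in Htr. rewrite Hmx in Htr.
    destruct (m y) as [r'|] eqn:Hmy.
    + pose proof (Hpos y r' Hmy).
      destruct (Rtotal_order r' (r - t)) as [Hl|[->|Hg]]; [|reflexivity|].
      * pose proof (Hbefore r' ltac:(lra)) as Hq. unfold in_dom in Hq. rewrite Hmy in Hq. lra.
      * exfalso. apply Hdies. unfold in_dom. rewrite Hmy. lra.
    + exfalso. apply Hdies. unfold in_dom. rewrite Hmy. split; [lra|exact I].
  - destruct (m y) as [r|] eqn:Hmy; [exfalso|reflexivity].
    pose proof (Hpos y r Hmy).
    assert (Hin : in_dom m (r + t) x) by (unfold in_dom; rewrite Hmx; split; [lra|exact I]).
    pose proof (proj2 (orbit_tail t r x y Ht ltac:(lra) Hxy Hin)) as Hq.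
    unfold in_dom in Hq. rewrite Hmy in Hq. lra.
Qed.

Lemma lifetime_weight_shift (t : R) (x y : X) : 0 <= t -> T t x = Some y ->
  lifetime_weight m y = exp t * lifetime_weight m x.
Proof.
  intros Ht Hxy. unfold lifetime_weight. rewrite (lifetime_shift t x y Ht Hxy).
  destruct (m x); simpl; [|ring].
  rewrite <- exp_plus. f_equal. ring.
Qed.

End LocalSemigroup.

Lemma lifetime_weight_bound {X : Type} (m : X -> option R) :
  (forall x r, m x = Some r -> 0 < r) -> forall x, Rabs (lifetime_weight m x) <= 1.
Proof.
  intros Hpos x. unfold lifetime_weight. destruct (m x) as [r|] eqn:E.
  - pose proof (Hpos x r E). rewrite Rabs_right by (left; apply exp_pos).
    rewrite <- exp_0. left. apply exp_increasing. lra.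
  - rewrite Rabs_R0. lra.
Qed.

(** The weight is [flat_exp] composed with the continuous function [1/m]. *)
Lemma lifetime_weight_continuous {X : Type} (d : X -> X -> R) (m : X -> option R) :
  (forall x r, m x = Some r -> 0 < r) -> cont_X d (inv_m m) ->
  cont_X d (lifetime_weight m).
Proof.
  intros Hpos Hinv.
  assert (Hnonneg : forall x, 0 <= inv_m m x).
  { intro x. unfold inv_m. destruct (m x) as [r|] eqn:E; [|lra].
    left; apply Rinv_0_lt_compat; exact (Hpos x r E). }
  assert (Hcomp : forall x, lifetime_weight m x = flat_exp (inv_m m x)).
  { intro x. unfold lifetime_weight, inv_m, flat_exp. destruct (m x) as [r|] eqn:E.
    - pose proof (Hpos x r E). assert (0 < / r) by (apply Rinv_0_lt_compat; lra).
      destruct (Rle_dec (/ r) 0); [lra|]. rewrite Rinv_inv. reflexivity.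
    - destruct (Rle_dec 0 0); [reflexivity|lra]. }
  intros x eps Heps.
  destruct (flat_exp_continuous (inv_m m x) (Hnonneg x) eps Heps) as [d1 [Hd1 Hp]].
  destruct (Hinv x d1 Hd1) as [d2 [Hd2 Hi]].
  exists d2. split; [exact Hd2|]. intros y Hy. rewrite !Hcomp.
  apply Hp; [apply Hnonneg|apply Hi; exact Hy].
Qed.

Lemma exponential_orbit_eigen {X : Type} (d : X -> X -> R) (T : R -> X -> option X)
    (g : X -> R) :
  cont_X d g -> (forall x, Rabs (g x) <= 1) ->
  (forall t x y, 0 <= t -> T t x = Some y -> g y = exp t * g x) ->
  lie_gen d T g (fun x => 1 * g x).
Proof.
  intros Hgc Hgb Hshift.
  replace (fun x => 1 * g x) with g by (apply functional_extensionality; intro; ring).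
  assert (HCB : CB d g) by (split; [exact Hgc|exists 1; exact Hgb]).
  split; [exact HCB|split; [exact HCB|]].
  intros x eps Heps.
  destruct (derivable_pt_lim_exp 0 eps Heps) as [del Hdel].
  exists del. split; [apply cond_pos|].
  intros t y [Ht0 Htd] Hty. rewrite (Hshift t x y (Rlt_le _ _ Ht0) Hty).
  specialize (Hdel t ltac:(lra) ltac:(rewrite Rabs_right; lra)).
  rewrite Rplus_0_l, exp_0 in Hdel.
  replace ((exp t * g x - g x) / t - g x) with (g x * ((exp t - 1) / t - 1)) by (field; lra).
  rewrite Rabs_mult. pose proof (Hgb x). pose proof (Rabs_pos ((exp t - 1) / t - 1)).
  apply Rle_lt_trans with (1 * Rabs ((exp t - 1) / t - 1)); [|lra].
  apply Rmult_le_compat_r; assumption.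
Qed.

Lemma local_pos_eigenvalue {X : Type} (d : X -> X -> R) (T : R -> X -> option X) :
  is_metric d -> is_local_semigroup d T -> has_pos_eigenvalue d T.
Proof.
  intros Hm [m [Hpos [Hinv [[x1 Hx1] [Hdom [_ [Hsemi [Hcont Hmax]]]]]]]].
  exists 1, (lifetime_weight m). split; [lra|]. split.
  - apply exponential_orbit_eigen.
    + exact (lifetime_weight_continuous d m Hpos Hinv).
    + exact (lifetime_weight_bound m Hpos).
    + intros t x y. apply (lifetime_weight_shift X d T m (metric_refl d Hm)
        (proj1 (proj2 (proj2 Hm))) Hpos Hdom Hsemi Hcont Hmax).
  - exists x1. unfold lifetime_weight. destruct (m x1) as [r|]; [|congruence].
    pose proof (exp_pos (- r)). lra.
Qed.

Theorem theorem3 (X : Type) (d : X -> X -> R) (T : R -> X -> option X)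
  (HX : polish d)
  (HT : is_global_semigroup d T \/ is_local_semigroup d T) :
  has_pos_eigenvalue d T <-> is_local_semigroup d T.
Proof.
  destruct HX as [Hmetric _]. split.
  - intro Heig. destruct HT as [Hglobal|Hlocal]; [|exact Hlocal].
    exfalso. exact (global_no_pos_eigenvalue d T Hmetric Hglobal Heig).
  - exact (local_pos_eigenvalue d T Hmetric).
Qed.
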